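(* For every sufficiently small fixed $\varepsilon>0$ and $p=n^{-(2/5+\varepsilon)}$, asymptotically almost surely $G\sim\mathbb{G}(n,p)$ does not contain pairwise edge-disjoint $K_4$-tiled subgraphs $H_1,\dots,H_k$ with $k\ge 2$ and $|V(H_i)\cap V(H_{i+1})|=1$ for every $i\in[k-1]$, such that $\phi(H_1)\ge 6$, $\phi(H_k)\ge 6$, and $\phi(H_i)\ge 3$ for every $2\le i\le k-1$, where $\phi(H)=8-5v(H)+2e(H)$.
   Context: A graph is $K_4$-tiled if every edge lies in a copy of $K_4$ and the auxiliary graph whose vertices are the copies of $K_4$ (two adjacent iff they share an edge) is connected. *)

From HB Require Import structures.
From mathcomp Require Import all_boot all_order all_algebra.
From mathcomp Require Import all_classical all_reals all_analysis.
Set Implicit Arguments. Unset Strict Implicit. Unset Printing Implicit Defensive.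
Import Order.TTheory GRing.Theory Num.Theory.
Local Open Scope ring_scope.

(* Simple graphs on vertex set 'I_n are represented by their edge sets:
   an edge is a 2-element subset of 'I_n. *)
Definition pairs (n : nat) : {set {set 'I_n}} := [set e : {set 'I_n} | #|e| == 2%N].

Definition clique_edges (n : nat) (Q : {set 'I_n}) : {set {set 'I_n}} :=
  [set e in pairs n | e \subset Q].

Definition verts (n : nat) (H : {set {set 'I_n}}) : {set 'I_n} :=
  \bigcup_(e in H) e.

Definition K4_copies (n : nat) (H : {set {set 'I_n}}) : {set {set 'I_n}} :=
  [set Q : {set 'I_n} | (#|Q| == 4%N) && (clique_edges Q \subset H)].

Definition K4_adj (n : nat) (H : {set {set 'I_n}}) : rel {set 'I_n} :=
  fun Q Q' => [&& Q \in K4_copies H, Q' \in K4_copies H & (2 <= #|Q :&: Q'|)%N].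

Definition K4_tiled (n : nat) (H : {set {set 'I_n}}) : Prop :=
  (forall e, e \in H -> exists2 Q, Q \in K4_copies H & e \subset Q) /\
  (forall Q Q', Q \in K4_copies H -> Q' \in K4_copies H -> connect (K4_adj H) Q Q').

Definition phi (n : nat) (H : {set {set 'I_n}}) : int :=
  8 - 5 * (#|verts H|)%:Z + 2 * (#|H|)%:Z.

Definition has_bad_chain (n : nat) (G : {set {set 'I_n}}) : Prop :=
  exists (k : nat) (Hs : nat -> {set {set 'I_n}}),
    [/\ (2 <= k)%N,
        (forall i, (i < k)%N -> Hs i \subset G /\ K4_tiled (Hs i)),
        (forall i j, (i < k)%N -> (j < k)%N -> i != j -> [disjoint Hs i & Hs j]),
        (forall i, (i.+1 < k)%N -> #|verts (Hs i) :&: verts (Hs i.+1)| = 1%N) &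
        [/\ 6 <= phi (Hs 0%N), 6 <= phi (Hs k.-1) &
            (forall i, (0 < i)%N -> (i < k.-1)%N -> 3 <= phi (Hs i))]].

Definition gnp_prob (R : realType) (n : nat) (p : R) (P : {set {set 'I_n}} -> Prop) : R :=
  \sum_(E in powerset (pairs n) | `[< P E >])
     p ^+ #|E| * (1 - p) ^+ (#|pairs n| - #|E|).

(* Proof by the first moment method.  Fix an integer K > 1/eps and call a
   nonempty graph on at most M = 2K + 10 vertices dense if
   5 K v <= (2 K + 4) e.  Deterministic part: a graph G without dense
   subgraphs has no such chain.  First, a K4-tiled graph can be grown from one
   K4 by adding copies that share an edge with the current union; each step
   adds at most two vertices and keeps phi >= 0 (tile_step), so a piece with
   more than B = K + 4 vertices would contain a subgraph with B+1 or B+2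
   vertices and phi >= 0, which is dense (tiled_crossing, tiled_small).  Then
   the prefix unions of a chain keep 5 v <= 2 e + 2 and at most B vertices,
   and attaching the last piece yields 5 v < 2 e on at most 2B vertices, a
   dense subgraph (chain_contradiction, no_bad_chain).  Probabilistic part: a
   dense F has p^e(F) <= n^-(eps/5) n^-v(F), and there are at most 2^(2^M)
   graphs on each vertex set, so the union bound gives
   P(G has a dense subgraph) <= 2^(2^M) e n^-(eps/5) -> 0
   (gnp_no_bad_chain_ge, cvg_to_one_powR). *)

From HB Require Import structures.
From mathcomp Require Import all_boot all_order all_algebra.
From mathcomp Require Import all_classical all_reals all_analysis.
From mathcomp Require Import fintype finset zify lra.
Import Order.TTheory GRing.Theory Num.Theory numFieldNormedType.Exports.
Set Implicit Arguments. Unset Strict Implicit. Unset Printing Implicit Defensive.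

Lemma vertsP n (F : {set {set 'I_n}}) x :
  reflect (exists2 e, e \in F & x \in e) (x \in verts F).
Proof. exact: bigcupP. Qed.

Lemma edge_sub_verts n (F : {set {set 'I_n}}) e : e \in F -> e \subset verts F.
Proof. by move=> eF; apply/subsetP => x xe; apply/vertsP; exists e. Qed.

Lemma verts0 n : verts (set0 : {set {set 'I_n}}) = set0.
Proof. exact: big_set0. Qed.

Lemma vertsU n (F1 F2 : {set {set 'I_n}}) : verts (F1 :|: F2) = verts F1 :|: verts F2.
Proof. exact: bigcup_setU. Qed.

Lemma verts_mono n (F1 F2 : {set {set 'I_n}}) :
  F1 \subset F2 -> verts F1 \subset verts F2.
Proof.
move=> /subsetP sF; apply/subsetP => x /vertsP[e eF xe].
by apply/vertsP; exists e; rewrite ?sF.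
Qed.

Lemma phi_ge n (H : {set {set 'I_n}}) (c : nat) :
  (c%:Z <= phi H)%R -> (5 * #|verts H| + c <= 2 * #|H| + 8)%N.
Proof. by rewrite /phi; move: #|verts H| #|H| => v e; lia. Qed.

Lemma glue_counts n (U H : {set {set 'I_n}}) :
  [disjoint U & H] -> (0 < #|verts U :&: verts H|)%N ->
  #|U :|: H| = (#|U| + #|H|)%N /\
  (#|verts (U :|: H)| < #|verts U| + #|verts H|)%N.
Proof.
move=> UH shared; rewrite cardsU (disjoint_setI0 UH) cards0 subn0; split => //.
by rewrite vertsU -cardsUI -addn1 leq_add2l.
Qed.

Lemma card_clique_edges n (Q : {set 'I_n}) : #|clique_edges Q| = 'C(#|Q|, 2).
Proof. by rewrite -cards_draws; apply: eq_card => e; rewrite !inE andbC. Qed.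

Lemma clique_edge_sub n (Q : {set 'I_n}) e : e \in clique_edges Q -> e \subset Q.
Proof. by rewrite inE => /andP[]. Qed.

Lemma verts_clique_edges n (Q : {set 'I_n}) :
  (2 <= #|Q|)%N -> verts (clique_edges Q) = Q.
Proof.
move=> Q2; apply/setP => x; apply/vertsP/idP => [[e /clique_edge_sub/subsetP]|xQ].
  by apply.
have [y /setD1P[yx yQ]] : exists y, y \in Q :\ x.
  by apply/set0Pn; rewrite -card_gt0; move: Q2; rewrite (cardsD1 x Q) xQ.
exists [set x; y]; last by rewrite !inE eqxx.
by rewrite !inE cards2 (eq_sym x y) yx subUset !sub1set xQ yQ.
Qed.

Definition tile_verts n (S : {set {set 'I_n}}) : {set 'I_n} := \bigcup_(Q in S) Q.
Definition tile_edges n (S : {set {set 'I_n}}) : {set {set 'I_n}} :=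
  \bigcup_(Q in S) clique_edges Q.

Lemma tile_edge_sub n (S : {set {set 'I_n}}) e :
  e \in tile_edges S -> e \subset tile_verts S.
Proof.
case/bigcupP=> Q QS /clique_edge_sub/subsetP eQ.
by apply/subsetP => x /eQ xQ; apply/bigcupP; exists Q.
Qed.

Lemma verts_tile_edges n (S : {set {set 'I_n}}) :
  (forall Q, Q \in S -> 2 <= #|Q|)%N -> verts (tile_edges S) = tile_verts S.
Proof.
move=> S2; apply/setP => x; apply/idP/idP => [/vertsP[e /tile_edge_sub/subsetP]|].
  by apply.
case/bigcupP=> Q QS; rewrite -(verts_clique_edges (S2 _ QS)) => /vertsP[e eQ xe].
by apply/vertsP; exists e => //; apply/bigcupP; exists Q.
Qed.

(* Adding a new K4 that meets the current vertex set in b >= 2 vertices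
   adds 4 - b <= 2 vertices and at least 6 - C(b,2) edges; since
   5 (4 - b) <= 2 (6 - C(b,2)) for b in {2,3,4}, the bound 5 v <= 2 e + 8
   (i.e. phi >= 0) is preserved. *)
Lemma tile_step n (S : {set {set 'I_n}}) (Q : {set 'I_n}) :
  #|Q| = 4 -> Q \notin S -> (2 <= #|Q :&: tile_verts S|)%N ->
  (5 * #|tile_verts S| <= 2 * #|tile_edges S| + 8)%N ->
  (5 * #|tile_verts (Q |: S)| <= 2 * #|tile_edges (Q |: S)| + 8)%N /\
  (#|tile_verts (Q |: S)| <= #|tile_verts S| + 2)%N.
Proof.
move=> Q4 QS b2 sparse.
have -> : tile_verts (Q |: S) = Q :|: tile_verts S by rewrite /tile_verts big_setU1.
have -> : tile_edges (Q |: S) = clique_edges Q :|: tile_edges S.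
  by rewrite /tile_edges big_setU1.
have cV := cardsUI Q (tile_verts S).
have cE := cardsUI (clique_edges Q) (tile_edges S).
have old_edges :
    clique_edges Q :&: tile_edges S \subset clique_edges (Q :&: tile_verts S).
  apply/subsetP => e /setIP[]; rewrite !inE => /andP[-> eQ] /tile_edge_sub eS.
  by rewrite subsetI eQ.
have old_le := subset_leq_card old_edges.
have b4 : (#|Q :&: tile_verts S| <= 4)%N by rewrite -Q4 subset_leq_card ?subsetIl.
rewrite !card_clique_edges Q4 in cV cE old_le.
move: #|Q :&: tile_verts S| b2 b4 cV old_le => b b2 b4 cV old_le.
have Cb : (5 * (4 - b) <= 2 * (6 - 'C(b, 2)))%N /\ ('C(b, 2) <= 6)%N.
  by case: b b2 b4 {cV old_le} => [|[|[|[|[|b]]]]].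
have C6 : 'C(4, 2) = 6 by [].
lia.
Qed.

Section Growth.
Variables (n : nat) (H : {set {set 'I_n}}).
Hypothesis tiled : K4_tiled H.

Local Notation copies := (K4_copies H).

Lemma card_copy (Q : {set 'I_n}) : Q \in copies -> #|Q| = 4.
Proof. by rewrite inE => /andP[/eqP]. Qed.

(* Connectivity of the auxiliary graph: a proper subfamily S of the copies
   containing some copy is left by an auxiliary edge, i.e. some copy outside S
   shares two vertices with a member of S. *)
Lemma adjacent_copy (S : {set {set 'I_n}}) (Q0 : {set 'I_n}) :
  S \subset copies -> Q0 \in S -> S != copies ->
  exists Q, [/\ Q \in copies, Q \notin S & (2 <= #|Q :&: tile_verts S|)%N].
Proof.
move=> sS Q0S SnC.
have [/existsP[Q /and3P[QC QS /exists_inP[Q' Q'S QQ']]] | none] :=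
  boolP [exists Q, [&& Q \in copies, Q \notin S &
                      [exists Q' in S, 2 <= #|Q' :&: Q|]]].
  exists Q; split=> //; apply: leq_trans QQ' (subset_leq_card _).
  by rewrite setIC setIS // (bigcup_sup Q').
have [Q1 Q1C Q1S] : exists2 Q1, Q1 \in copies & Q1 \notin S.
  by apply/subsetPn; apply: contra SnC => CS; rewrite eqEsubset sS.
have closedS : closed_mem (K4_adj H) (mem S).
  move=> Q Q' /and3P[QC Q'C QQ'].
  case QS: (Q \in S); case Q'S: (Q' \in S) => //; case/existsP: none.
    by exists Q'; rewrite Q'C Q'S /=; apply/exists_inP; exists Q.
  by exists Q; rewrite QC QS /=; apply/exists_inP; exists Q'; rewrite // setIC.
have := closed_connect closedS (tiled.2 _ _ (subsetP sS _ Q0S) Q1C).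
by rewrite Q0S (negbTE Q1S).
Qed.

Definition grown_from (Q0 : {set 'I_n}) (S : {set {set 'I_n}}) : Prop :=
  [/\ S \subset copies, Q0 \in S &
      (5 * #|tile_verts S| <= 2 * #|tile_edges S| + 8)%N].

(* Adding adjacent copies one at a time (adjacent_copy, tile_step): for every
   j, either j copies grown from Q0 span at most B vertices, or some grown
   family has already crossed B, by at most two vertices. *)
Lemma tile_growth (B : nat) (Q0 : {set 'I_n}) : (4 <= B)%N -> Q0 \in copies ->
  forall j, (0 < j <= #|copies|)%N ->
  (exists S : {set {set 'I_n}},
     [/\ grown_from Q0 S, #|S| = j & (#|tile_verts S| <= B)%N]) \/
  (exists S : {set {set 'I_n}}, grown_from Q0 S /\ (B < #|tile_verts S| <= B + 2)%N).
Proof.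
move=> B4 Q0C; elim=> // -[_ _|j IH /andP[_ jC]].
  left; exists [set Q0].
  rewrite /grown_from /tile_verts /tile_edges !big_set1 sub1set Q0C set11 cards1.
  by rewrite card_clique_edges card_copy.
case: IH => [|[S [[sS Q0S sparse] cardS small]]|]; [by rewrite /= ltnW | | by right].
have SnC : S != copies by apply/eqP => SC; move: jC; rewrite -SC cardS ltnn.
have [Q [QC QS shared]] := adjacent_copy sS Q0S SnC.
have [sparse' step] := tile_step (card_copy QC) QS shared sparse.
have grown' : grown_from Q0 (Q |: S).
  by split=> //; rewrite ?subUset ?sub1set ?QC ?sS // in_setU Q0S orbT.
have [small'|big'] := leqP #|tile_verts (Q |: S)| B.
  by left; exists (Q |: S); rewrite cardsU1 QS cardS.
by right; exists (Q |: S); rewrite big' (leq_trans step) ?leq_add2r.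
Qed.

Lemma tiled_crossing (B : nat) : (4 <= B)%N -> (B < #|verts H|)%N ->
  exists F : {set {set 'I_n}}, [/\ F \subset H, (B < #|verts F| <= B + 2)%N &
                (5 * #|verts F| <= 2 * #|F| + 8)%N].
Proof.
move=> B4 Bv.
have [x /vertsP[e eH _]] : exists x, x \in verts H.
  by apply/set0Pn; rewrite -card_gt0 (leq_trans _ Bv).
have [Q0 Q0C _] := tiled.1 e eH.
have C0 : (0 < #|copies| <= #|copies|)%N.
  by rewrite leqnn andbT card_gt0; apply/set0Pn; exists Q0.
case: (tile_growth B4 Q0C C0) =>
  [[S [[sS _ _] cardS small]] | [S [[sS _ sparse] crossed]]].
  have SC : S = copies by apply/eqP; rewrite eqEcard sS cardS leqnn.
  have : verts H \subset tile_verts S.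
    apply/subsetP => y /vertsP[e' e'H ye']; have [Q QC e'Q] := tiled.1 e' e'H.
    by apply/bigcupP; exists Q; rewrite ?SC ?(subsetP e'Q).
  by move/subset_leq_card/leq_trans/(_ small); rewrite leqNgt Bv.
have S2 Q : Q \in S -> (2 <= #|Q|)%N by move/(subsetP sS)/card_copy ->.
exists (tile_edges S); rewrite verts_tile_edges //; split=> //.
by apply/subsetP => e' /bigcupP[Q /(subsetP sS)]; rewrite inE => /andP[_ /subsetP]; apply.
Qed.

End Growth.

Fixpoint chain_union n (Hs : nat -> {set {set 'I_n}}) (j : nat) : {set {set 'I_n}} :=
  if j is j'.+1 then chain_union Hs j' :|: Hs j else Hs 0.

Lemma chain_union_mem n (Hs : nat -> {set {set 'I_n}}) j e :
  e \in chain_union Hs j -> exists2 i, (i <= j)%N & e \in Hs i.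
Proof.
elim: j => [|j IH] /=; first by exists 0%N.
by case/setUP=> [/IH[i ij eHi]|eHj]; [exists i; rewrite ?leqW | exists j.+1].
Qed.

Lemma sub_chain_union n (Hs : nat -> {set {set 'I_n}}) i j :
  (i <= j)%N -> Hs i \subset chain_union Hs j.
Proof.
elim: j => [|j IH]; first by rewrite leqn0 => /eqP->.
rewrite leq_eqVlt ltnS => /predU1P[-> | /IH sub] /=; first exact: subsetUr.
exact: subset_trans sub (subsetUl _ _).
Qed.

Section Chain.
Variables (n : nat) (G : {set {set 'I_n}}) (B : nat).
Hypothesis B4 : (4 <= B)%N.
Hypothesis sparse_small : forall F : {set {set 'I_n}}, F \subset G ->
  (#|verts F| <= 2 * B + 2)%N -> (5 * #|verts F| <= 2 * #|F| + 8)%N ->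
  (#|verts F| <= B)%N.
Hypothesis no_dense : forall F : {set {set 'I_n}}, F \subset G ->
  (#|verts F| <= 2 * B + 2)%N -> (2 * #|F| <= 5 * #|verts F|)%N.

(* A K4-tiled subgraph could otherwise be cut off just above B vertices. *)
Lemma tiled_small (H : {set {set 'I_n}}) :
  H \subset G -> K4_tiled H -> (#|verts H| <= B)%N.
Proof.
move=> HG tiled; rewrite leqNgt; apply/negP => Bv.
have [F [FH /andP[BvF vFB] sparse]] := tiled_crossing tiled B4 Bv.
have vF2 : (#|verts F| <= 2 * B + 2)%N by apply: leq_trans vFB _; lia.
by move: (sparse_small (subset_trans FH HG) vF2 sparse); rewrite leqNgt BvF.
Qed.

Variables (k : nat) (Hs : nat -> {set {set 'I_n}}).
Hypothesis pieces : forall i, (i < k)%N -> Hs i \subset G /\ K4_tiled (Hs i).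
Hypothesis disjoint_pieces : forall i j, (i < k)%N -> (j < k)%N -> i != j ->
  [disjoint Hs i & Hs j].
Hypothesis linked : forall i, (i.+1 < k)%N ->
  #|verts (Hs i) :&: verts (Hs i.+1)| = 1%N.

Lemma chain_union_sub j : (j < k)%N -> chain_union Hs j \subset G.
Proof.
move=> jk; apply/subsetP => e /chain_union_mem[i ij /(subsetP (pieces _).1)]; apply.
exact: leq_ltn_trans jk.
Qed.

(* Attaching the next piece: it is edge-disjoint from the union so far and
   shares a vertex with it. *)
Lemma chain_attach j : (j.+1 < k)%N ->
  #|chain_union Hs j.+1| = (#|chain_union Hs j| + #|Hs j.+1|)%N /\
  (#|verts (chain_union Hs j.+1)| <
   #|verts (chain_union Hs j)| + #|verts (Hs j.+1)|)%N.
Proof.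
move=> jk; apply: glue_counts.
  apply/pred0P => e /=; apply/negbTE/andP => -[/chain_union_mem[i ij eHi] eHj].
  have ik : (i < k)%N by rewrite (leq_ltn_trans ij) // ltnW.
  have ij1 : i != j.+1 by rewrite ltn_eqF // ltnS.
  by rewrite (disjointFr (disjoint_pieces ik jk ij1) eHi) in eHj.
by rewrite -(linked jk) subset_leq_card // setSI // verts_mono // sub_chain_union.
Qed.

Hypothesis phi_first : (6 <= phi (Hs 0))%R.
Hypothesis phi_inner : forall i, (0 < i)%N -> (i < k.-1)%N -> (3 <= phi (Hs i))%R.

(* Every proper prefix U of the chain has phi(U) >= 6, i.e. 5 v <= 2 e + 2:
   the first piece has phi >= 6, and gluing an inner piece H at one vertex
   changes phi by phi(H) - 3 >= 0.  By local sparseness U stays small. *)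
Lemma chain_prefix j : (j.+1 < k)%N ->
  (5 * #|verts (chain_union Hs j)| <= 2 * #|chain_union Hs j| + 2)%N /\
  (#|verts (chain_union Hs j)| <= B)%N.
Proof.
elim: j => [k1|j IH jk].
  have [H0G tiled0] := pieces (ltnW k1).
  by have := phi_ge phi_first; have := tiled_small H0G tiled0; simpl; lia.
have [sparse small] := IH (ltnW jk).
have [Hj tiledj] := pieces (ltnW jk).
have jk1 : (j.+1 < k.-1)%N by rewrite ltn_predRL.
have phij := phi_ge (phi_inner (ltn0Sn j) jk1).
have smallj := tiled_small Hj tiledj.
have [cE cV] := chain_attach (ltnW jk).
have sparse' : (5 * #|verts (chain_union Hs j.+1)| <= 2 * #|chain_union Hs j.+1| + 2)%N.
  by lia.
split=> //; apply: sparse_small; [exact: chain_union_sub (ltnW jk) | lia | lia].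
Qed.

Hypothesis k2 : (2 <= k)%N.
Hypothesis phi_last : (6 <= phi (Hs k.-1))%R.

(* Attaching the last piece (phi >= 6) to the prefix gives 5 v < 2 e on at
   most 2B vertices, which G forbids. *)
Lemma chain_contradiction : False.
Proof.
case: k k2 pieces chain_prefix chain_attach chain_union_sub phi_last => [|[|j]] // _.
move=> pieces' prefix attach subG; rewrite [j.+2.-1]/= => /phi_ge phij.
have [sparse small] := prefix j (ltnSn _).
have [cE cV] := attach j (ltnSn _).
have [Hj tiledj] := pieces' _ (ltnSn _).
have smallj := tiled_small Hj tiledj.
have vU : (#|verts (chain_union Hs j.+1)| <= 2 * B + 2)%N by lia.
have := no_dense (subG _ (ltnSn _)) vU; lia.
Qed.

End Chain.

(* F is (K, M)-dense: a nonempty subgraph on at most M vertices with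
   5 K v(F) <= (2 K + 4) e(F).  For K > 1/eps, G(n, n^-(2/5+eps)) a.a.s.
   has no dense subgraph. *)
Definition dense (K M n : nat) (F : {set {set 'I_n}}) : bool :=
  [&& (0 < #|F|)%N, (#|verts F| <= M)%N &
      (5 * K * #|verts F| <= (2 * K + 4) * #|F|)%N].

(* A graph without (K, 2K+10)-dense subgraphs contains no bad chain: it is
   locally sparse in the sense of section Chain, with B = K + 4. *)
Lemma no_bad_chain (K n : nat) (G : {set {set 'I_n}}) :
  (forall F : {set {set 'I_n}}, F \subset G -> ~~ dense K (2 * (K + 4) + 2) F) ->
  ~ has_bad_chain G.
Proof.
move=> not_dense [k [Hs [k2 pieces disjoint_pieces linked [phi0 phik phi_inner]]]].
have B4 : (4 <= K + 4)%N by rewrite leq_addl.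
apply: (chain_contradiction B4 _ _ pieces disjoint_pieces linked phi0 phi_inner k2 phik).
- move=> F FG vM sparse; have [/cards0_eq-> | e0] := posnP #|F|.
    by rewrite verts0 cards0.
  move: (not_dense F FG); rewrite /dense e0 vM /= -ltnNge.
  have := leq_mul (leqnn K) sparse.
  by move: #|verts F| #|F| {vM sparse e0} => v e; nia.
- move=> F FG vM; rewrite leqNgt; apply/negP => dense_F.
  have e0 : (0 < #|F|)%N by move: dense_F; lia.
  move: (not_dense F FG); rewrite /dense e0 vM /= -ltnNge.
  have := leq_mul (leqnn K) (ltnW dense_F).
  by move: #|verts F| #|F| {vM dense_F} => v e; nia.
Qed.

Local Open Scope ring_scope.

Lemma sum_powerset_card (R : comPzRingType) (T : finType) (S : {set T}) (f : nat -> R) :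
  \sum_(E in powerset S) f #|E| = \sum_(k < #|S|.+1) f k *+ 'C(#|S|, k).
Proof.
rewrite (partition_big (fun E : {set T} => inord #|E| : 'I_#|S|.+1) xpredT) //=.
apply: eq_bigr => k _; rewrite -cards_draws -sumr_const.
apply: eq_big => [E|E]; rewrite !inE ?powersetE.
  case sE: (E \subset S) => //=.
  have ES : (#|E| < #|S|.+1)%N by rewrite ltnS subset_leq_card.
  apply/eqP/eqP => [<- | kE]; first by rewrite inordK.
  by apply: val_inj; rewrite /= inordK.
case/andP=> sE /eqP <-; have ES : (#|E| < #|S|.+1)%N by rewrite ltnS subset_leq_card.
by rewrite inordK.
Qed.

Lemma sum_subsets_pow (R : comPzRingType) (T : finType) (x : R) :
  \sum_(W : {set T}) x ^+ #|W| = (1 + x) ^+ #|T|.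
Proof.
rewrite (eq_bigl (mem (powerset [set: T]))) => [|W]; last by rewrite !inE subsetT.
rewrite sum_powerset_card cardsT exprDn.
by apply: eq_bigr => k _; rewrite expr1n mul1r.
Qed.

(* Probability that the random subset of S, containing each element
   independently with probability p, equals E; gnp_prob sums these weights. *)
Definition bernoulli_weight (R : pzRingType) (T : finType) (S : {set T}) (p : R)
    (E : {set T}) : R :=
  p ^+ #|E| * (1 - p) ^+ (#|S| - #|E|).

Lemma bernoulli_weight_ge0 (R : numDomainType) (T : finType) (S E : {set T}) (p : R) :
  0 <= p <= 1 -> 0 <= bernoulli_weight S p E.
Proof. by case/andP=> p0 p1; rewrite mulr_ge0 ?exprn_ge0 ?subr_ge0. Qed.

Lemma bernoulli_total (R : comPzRingType) (T : finType) (S : {set T}) (p : R) :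
  \sum_(E in powerset S) bernoulli_weight S p E = 1.
Proof.
rewrite (sum_powerset_card S (fun k => p ^+ k * (1 - p) ^+ (#|S| - k))).
rewrite -[RHS](expr1n _ #|S|) -[X in X ^+ _](subrK p) exprDn.
by apply: eq_bigr => k _; rewrite mulrC.
Qed.

Lemma bernoulli_upset (R : comPzRingType) (T : finType) (S F : {set T}) (p : R) :
  F \subset S ->
  \sum_(E in powerset S | F \subset E) bernoulli_weight S p E = p ^+ #|F|.
Proof.
move=> FS.
rewrite (reindex_onto (fun E' : {set T} => E' :|: F) (fun E => E :\: F)); last first.
  move=> E /andP[_ FE]; apply/setP => x; rewrite !inE.
  by case xF: (x \in F); rewrite /= ?(subsetP FE x xF) ?orbF.
rewrite (eq_bigl (fun E' => E' \in powerset (S :\: F))); last first.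
  move=> E' /=; rewrite !powersetE subsetUr andbT subUset FS andbT.
  rewrite setDUl setDv setU0 subsetD; congr andb.
  by apply/eqP/idP => [/setDidPl|/setDidPl ->].
rewrite -[RHS]mulr1 -(bernoulli_total (S :\: F) p) mulr_sumr.
apply: eq_bigr => E'; rewrite powersetE subsetD => /andP[_ E'F].
rewrite /bernoulli_weight cardsU (disjoint_setI0 E'F) cards0 subn0 cardsD (setIidPr FS).
by rewrite (addnC #|E'|) subnDA exprD -mulrA mulrCA.
Qed.

Lemma ler_sum_subfilter (R : numDomainType) (T : finType) (P Q : pred T) (w : T -> R) :
  (forall x, P x -> Q x) -> (forall x, Q x -> 0 <= w x) ->
  \sum_(x | P x) w x <= \sum_(x | Q x) w x.
Proof.
move=> PQ w0; rewrite [X in X <= _]big_mkcond [X in _ <= X]big_mkcond /=.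
apply: ler_sum => x _; case Px: (P x); first by rewrite PQ.
by case Qx: (Q x); rewrite ?w0.
Qed.

(* Union bound: the random subset of S contains a member of the family bad
   with probability at most the sum of the probabilities p^|F| of containing
   each member F (members not inside S are never contained). *)
Lemma union_bound (R : numDomainType) (T : finType) (S : {set T}) (p : R)
    (bad : pred {set T}) :
  0 <= p <= 1 ->
  \sum_(E in powerset S | [exists F, bad F && (F \subset E)]) bernoulli_weight S p E
    <= \sum_(F | bad F) p ^+ #|F|.
Proof.
move=> p01; pose w := bernoulli_weight S p.
have w0 E : 0 <= w E := bernoulli_weight_ge0 S E p01.
apply: (@le_trans _ _ (\sum_(E in powerset S) \sum_(F | bad F && (F \subset E)) w E)).
  rewrite big_mkcondr; apply: ler_sum => E _.
  case: ifP => [/existsP[F0 F0E]|_]; last exact: sumr_ge0.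
  by rewrite (bigD1 F0) //= lerDl sumr_ge0.
rewrite (exchange_big_dep bad) /=; last by move=> E F _ /andP[].
apply: ler_sum => F badF; under eq_bigl => E do rewrite badF.
have [FS|FnS] := boolP (F \subset S); first by rewrite bernoulli_upset.
rewrite big_pred0 ?exprn_ge0 //; first by case/andP: p01.
move=> E; apply/negbTE/andP => -[]; rewrite powersetE => ES FE.
by rewrite (subset_trans FE ES) in FnS.
Qed.

(* Counting subgraphs by their vertex sets: at most 2^(2^M) edge sets span a
   given set of at most M vertices. *)
Lemma sum_pow_verts_le (R : numDomainType) (n M : nat) (x : R)
    (P : pred {set {set 'I_n}}) :
  0 <= x -> (forall F, P F -> (#|verts F| <= M)%N) ->
  \sum_(F | P F) x ^+ #|verts F| <= (2 ^ (2 ^ M))%:R * (1 + x) ^+ n.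
Proof.
move=> x0 PM.
have -> : (1 + x) ^+ n = \sum_(W : {set 'I_n}) x ^+ #|W|.
  by rewrite sum_subsets_pow card_ord.
rewrite mulr_sumr (partition_big (@verts n) xpredT) //=; apply: ler_sum => W _.
rewrite (eq_bigr (fun _ => x ^+ #|W|)) => [|F /andP[_ /eqP ->]] //.
rewrite sumr_const -[X in X <= _]mulr_natl.
apply: ler_wpM2r; rewrite ?exprn_ge0 // ler_nat.
have [WM|MW] := leqP #|W| M; last first.
  rewrite eq_card0 // => F; rewrite !inE; apply/negbTE/andP => -[PF /eqP vF].
  by move: (PM F PF); rewrite vF leqNgt MW.
apply: (@leq_trans #|powerset (powerset W)|); last first.
  by rewrite !card_powerset leq_pexp2l // leq_pexp2l.
apply: subset_leq_card; apply/subsetP => F /andP[_ /eqP vF].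
rewrite !powersetE; apply/subsetP => e eF; rewrite powersetE -vF.
exact: edge_sub_verts.
Qed.

(* For K eps > 1 a dense subgraph satisfies v(F) + eps/5 <= (2/5 + eps) e(F):
   5 K v <= (2 K + 4) e and 4 e + K eps <= 5 K eps e. *)
Lemma dense_exponent (R : realType) (eps : R) (K M n : nat) (F : {set {set 'I_n}}) :
  0 < eps -> eps^-1 < K%:R -> dense K M F ->
  (#|verts F|)%:R + eps / 5 <= (2 / 5 + eps) * (#|F|)%:R.
Proof.
move=> eps0 Keps /and3P[e0 _]; rewrite -(ler_nat R) !(natrM, natrD).
have epsK : 1 < eps * K%:R by rewrite -{1}(mulfV (lt0r_neq0 eps0)) ltr_pM2l.
have : 1 <= (#|F|)%:R :> R by rewrite ler1n.
move: (#|verts F|)%:R (#|F|)%:R K%:R epsK => v e k epsK e1 dens.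
have k0 : 0 < k by rewrite ltNge; apply/negP => k0; nra.
have : (eps * k - 1) * e >= 0 /\ eps * k * (e - 1) >= 0 by split; nra.
suff : k * (5 * v + eps) <= k * ((2 + 5 * eps) * e) by rewrite ler_pM2l //; lra.
nra.
Qed.

Lemma dense_prob_le (R : realType) (eps : R) (K M n : nat) (F : {set {set 'I_n}}) :
  0 < eps -> eps^-1 < K%:R -> (1 <= n)%N -> dense K M F ->
  ((n%:R : R) `^ (- (2 / 5 + eps))) ^+ #|F|
    <= (n%:R : R) `^ (- (eps / 5)) * (n%:R^-1) ^+ #|verts F|.
Proof.
move=> eps0 Keps n1 dF; have n0 : 0 < n%:R :> R by rewrite ltr0n.
rewrite -powR_mulrn ?powR_ge0 // -powRrM exprVn -powR_invn ?(ltW n0) //.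
rewrite -powRD; last by rewrite lt0r_neq0 // implybT.
apply: ler_powR; first by rewrite ler1n.
have := dense_exponent eps0 Keps dF; lra.
Qed.

(* First moment: the expected number of dense subgraphs of G(n, p) is at most
   2^(2^M) e n^-(eps/5), using (1 + 1/n)^n <= e. *)
Lemma expected_dense_le (R : realType) (eps : R) (K M n : nat) :
  0 < eps -> eps^-1 < K%:R -> (1 <= n)%N ->
  \sum_(F | @dense K M n F) ((n%:R : R) `^ (- (2 / 5 + eps))) ^+ #|F|
    <= (2 ^ (2 ^ M))%:R * expR 1 * (n%:R : R) `^ (- (eps / 5)).
Proof.
move=> eps0 Keps n1; have n0 : 0 < n%:R :> R by rewrite ltr0n.
apply: le_trans (ler_sum _ (fun F => dense_prob_le eps0 Keps n1)) _.
rewrite -mulr_sumr mulrC ler_wpM2r ?powR_ge0 //.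
apply: le_trans (sum_pow_verts_le (M := M) _ _) _; first by rewrite invr_ge0 ltW.
  by move=> F /and3P[].
apply: ler_wpM2l => //.
have -> : expR 1 = expR n%:R^-1 ^+ n :> R by rewrite -expRM_natl mulfV ?lt0r_neq0.
apply: lerXn2r; rewrite ?nnegrE ?expR_ge0 ?addr_ge0 ?invr_ge0 ?(ltW n0) //.
exact: expR_ge1Dx.
Qed.

Lemma powR_neg_prob (R : realType) (a : R) (n : nat) :
  0 <= a -> (1 <= n)%N -> 0 <= (n%:R : R) `^ (- a) <= 1.
Proof.
move=> a0 n1; rewrite powR_ge0 -[X in _ <= X](powRr0 n%:R).
by apply: ler_powR; rewrite ?ler1n // oppr_le0.
Qed.

Lemma gnp_prob_le1 (R : realType) (n : nat) (p : R) (P : {set {set 'I_n}} -> Prop) :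
  0 <= p <= 1 -> gnp_prob p P <= 1.
Proof.
move=> p01; rewrite -(bernoulli_total (pairs n) p).
by apply: ler_sum_subfilter => [E /andP[] | E _]; rewrite ?bernoulli_weight_ge0.
Qed.

Lemma gnp_no_bad_chain_ge (R : realType) (eps : R) (K n : nat) :
  0 < eps -> eps^-1 < K%:R -> (1 <= n)%N ->
  1 - (2 ^ (2 ^ (2 * (K + 4) + 2)))%:R * expR 1 * (n%:R : R) `^ (- (eps / 5))
    <= @gnp_prob R n ((n%:R : R) `^ (- (2 / 5 + eps))) (fun G => ~ has_bad_chain G).
Proof.
move=> eps0 Keps n1; set p := (n%:R : R) `^ (- (2 / 5 + eps)).
have p01 : 0 <= p <= 1 by apply: powR_neg_prob; rewrite // addr_ge0 ?ltW.
pose bad := @dense K (2 * (K + 4) + 2) n.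
have few_dense :=
  le_trans (union_bound (pairs n) bad p01) (expected_dense_le _ eps0 Keps n1).
have total := bernoulli_total (pairs n) p.
rewrite (bigID (fun E : {set {set 'I_n}} => [exists F, bad F && (F \subset E)])) /=
  in total.
suff : \sum_(E in powerset (pairs n) | ~~ [exists F, bad F && (F \subset E)])
         bernoulli_weight (pairs n) p E <= @gnp_prob R n p (fun G => ~ has_bad_chain G).
  by move: few_dense total; rewrite -/p; lra.
apply: ler_sum_subfilter => [E /andP[EP none] | E _]; last exact: bernoulli_weight_ge0.
rewrite EP; apply/asboolP; apply: (no_bad_chain (K := K)) => F FE.
by apply: contraNN none => dF; apply/existsP; exists F; rewrite /bad dF FE.
Qed.

Local Open Scope classical_set_scope.
Local Open Scope ring_scope.

Lemma cvg_to_one_powR (R : realType) (u : nat -> R) (C a : R) :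
  0 < C -> 0 < a -> (forall n, (1 <= n)%N -> 1 - C * (n%:R : R) `^ (- a) <= u n <= 1) ->
  u @ \oo --> (1 : R).
Proof.
move=> C0 a0 bound; apply/cvgrPdist_lt => e e0.
have Ce0 : 0 < C / e by rewrite divr_gt0.
near=> n.
have n1 : 1 < n%:R :> R by near: n; exact: nbhs_infty_gtr.
have large : (C / e) `^ a^-1 < n%:R :> R by near: n; exact: nbhs_infty_gtr.
have n0 : 0 < n%:R :> R by apply: lt_trans n1.
have /andP[lo hi] : 1 - C * (n%:R : R) `^ (- a) <= u n <= 1.
  by apply: bound; move: n1; rewrite ltr1n => /ltnW.
have large_a : C / e < (n%:R : R) `^ a.
  have := gt0_ltr_powR a0 _ _ large.
  rewrite -powRrM mulVf ?gt_eqF // powRr1 ?ltW //.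
  by apply; rewrite nnegrE ?powR_ge0 // ltW.
have small : C * (n%:R : R) `^ (- a) < e.
  rewrite powRN -[X in X < _]/(C / (n%:R `^ a)) ltr_pdivrMr ?powR_gt0 //.
  by rewrite mulrC -(ltr_pdivrMr _ _ e0).
rewrite ger0_norm ?subr_ge0 //; lra.
Unshelve. all: end_near.
Qed.

(* The theorem holds with eps0 = 1 (indeed for every eps > 0): choose an
   integer K > 1/eps and squeeze with gnp_no_bad_chain_ge. *)
Theorem claim7p9 (R : realType) :
  exists eps0 : R, 0 < eps0 /\
    forall eps : R, 0 < eps -> eps < eps0 ->
      (fun n : nat => @gnp_prob R n ((n%:R : R) `^ (- (2 / 5 + eps)))
                         (fun G => ~ has_bad_chain G)) @ \oo --> (1 : R).
Proof.
exists 1; split => // eps eps0 _.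
have [K Keps] : exists K : nat, eps^-1 < K%:R.
  by exists (Num.Def.archi_bound eps^-1); apply: archi_boundP; rewrite invr_ge0 ltW.
apply: (@cvg_to_one_powR _ _ ((2 ^ (2 ^ (2 * (K + 4) + 2)))%:R * expR 1) (eps / 5)).
- by rewrite mulr_gt0 ?expR_gt0 // ltr0n expn_gt0.
- by rewrite divr_gt0.
move=> n n1; rewrite gnp_no_bad_chain_ge // gnp_prob_le1 //.
by apply: powR_neg_prob; rewrite // addr_ge0 ?ltW.
Qed.
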